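(* Let $B$, $\mathcal{U}=\{U_j\}_{j=1}^n$, $\{\varphi_j\}$, $q$, $\eta\in Z^1(\mathcal{N}(\mathcal{U});\mathbb{Z}_q)$ and $P_\eta$ be as below. Define $f:B\to L^n_q$ by \[ f(b)=\left[\sqrt{\varphi_1(b)}\,\zeta_q^{\eta_{j1}}:\cdots:\sqrt{\varphi_n(b)}\,\zeta_q^{\eta_{jn}}\right]\qquad\text{for } b\in U_j, \] with the convention that the $k$-th entry is $0$ if $U_j\cap U_k=\emptyset$. Then $f$ is well defined (independent of the choice of $j$ with $b\in U_j$), continuous, and classifies $P_\eta$: the principal $\mathbb{Z}_q$-bundle $P_\eta\to B$ is isomorphic to the pullback bundle $f^*(S^{2n-1})=\{(b,z)\in B\times S^{2n-1}: f(b)=p(z)\}\to B$, where $p:S^{2n-1}\to L^n_q$ is the quotient map. In particular, composing with the inclusion $L^n_q\subset L^\infty_q$, $f$ is a classifying map for $P_\eta$.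
   Context: $\zeta_q=e^{2\pi i/q}$. $\mathbb{Z}_q$ acts on $S^{2n-1}\subset\mathbb{C}^n$ by $z\cdot g=\zeta_q^g z$; the Lens space is $L^n_q=S^{2n-1}/\mathbb{Z}_q$ with quotient map $p$, and $[a_1:\cdots:a_n]$ denotes the class of $(a_1,\ldots,a_n)\in S^{2n-1}$ in $L^n_q$. $L^\infty_q=S^\infty/\mathbb{Z}_q$ similarly. $B$ is a topological space, $\mathcal{U}$ an open cover of $B$, $\{\varphi_j\}$ a partition of unity dominated by $\mathcal{U}$ (continuous $\varphi_j:B\to[0,1]$, $\sum_j\varphi_j\equiv1$, $\varphi_j=0$ outside $U_j$). The nerve $\mathcal{N}(\mathcal{U})$ has vertices $\{1,\ldots,n\}$ and simplices the index sets with nonempty common intersection. $\eta\in Z^1(\mathcal{N}(\mathcal{U});\mathbb{Z}_q)$ assigns $\eta_{jk}\in\mathbb{Z}_q$ to each ordered pair with $U_j\cap U_k\ne\emptyset$, with $\eta_{jj}=0$, $\eta_{kj}=-\eta_{jk}$, $\eta_{jk}+\eta_{kl}=\eta_{jl}$ whenever $U_j\cap U_k\cap U_l\ne\emptyset$. $P_\eta$ is the quotient of $\bigsqcup_j U_j\times\{j\}\times\mathbb{Z}_q$ by $(b,j,g)\sim(b,k,g+\eta_{jk})$ for $b\in U_j\cap U_k$, with projection $[b,j,g]\mapsto b$ and right action $[b,j,g]\cdot m=[b,j,g+m]$. Two principal $\mathbb{Z}_q$-bundles over $B$ are isomorphic if there is a $\mathbb{Z}_q$-equivariant homeomorphism of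 total spaces commuting with the projections. *)

From Stdlib Require Import Reals Lra Lia Arith Relations ClassicalEpsilon.
Open Scope R_scope.

Definition topology (X : Type) := (X -> Prop) -> Prop.

Definition is_topology {X : Type} (T : topology X) : Prop :=
  T (fun _ => True) /\
  (forall U V, T U -> T V -> T (fun x => U x /\ V x)) /\
  (forall F : (X -> Prop) -> Prop,
     (forall U, F U -> T U) -> T (fun x => exists U, F U /\ U x)).

Definition continuous {X Y : Type} (TX : topology X) (TY : topology Y)
  (f : X -> Y) : Prop := forall V, TY V -> TX (fun x => V (f x)).

Definition R_top : topology R :=
  fun U => forall x, U x -> exists eps, 0 < eps /\
    forall y, Rabs (y - x) < eps -> U y.

Definition subspace_top {X : Type} (T : topology X) (P : X -> Prop)
  : topology {x : X | P x} :=
  fun V => exists W, T W /\ forall y, V y <-> W (proj1_sig y).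

Definition prod_top {X Y : Type} (TX : topology X) (TY : topology Y)
  : topology (X * Y) :=
  fun W => forall x, W x -> exists O1 O2, TX O1 /\ TY O2 /\
    O1 (fst x) /\ O2 (snd x) /\
    forall y, O1 (fst y) -> O2 (snd y) -> W y.

Definition quotient_top {X Y : Type} (TX : topology X) (p : X -> Y)
  : topology Y := fun V => TX (fun x => V (p x)).

Definition Zq (q : nat) := { g : nat | (g < q)%nat }.

Lemma zq_add_lt (q : nat) (g m : Zq q) :
  ((proj1_sig g + proj1_sig m) mod q < q)%nat.
Proof. destruct g as [g Hg]; simpl. apply Nat.mod_upper_bound. lia. Qed.

Definition zq_add {q : nat} (g m : Zq q) : Zq q :=
  exist _ ((proj1_sig g + proj1_sig m) mod q)%nat (zq_add_lt q g m).

Definition C := (R * R)%type.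
Definition C0 : C := (0, 0).
Definition Cmul (a b : C) : C :=
  (fst a * fst b - snd a * snd b, fst a * snd b + snd a * fst b).
Definition Cscale (r : R) (a : C) : C := (r * fst a, r * snd a).
Definition Cnorm2 (a : C) : R := fst a ^ 2 + snd a ^ 2.

Definition zeta_pow (q g : nat) : C :=
  (cos (2 * PI * INR g / INR q), sin (2 * PI * INR g / INR q)).

(* vectors: sequences of complex numbers; C^n = those vanishing from index n on *)
Definition Vec := nat -> C.
Definition Vsub (v w : Vec) : Vec :=
  fun k => (fst (v k) - fst (w k), snd (v k) - snd (w k)).

Fixpoint rsum (n : nat) (f : nat -> R) : R :=
  match n with O => 0 | S m => rsum m f + f m end.

Lemma rsum_ext n f g : (forall k, (k < n)%nat -> f k = g k) -> rsum n f = rsum n g.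
Proof.
  induction n; intros H; simpl; [reflexivity|].
  rewrite IHn by (intros; apply H; lia). rewrite H by lia. reflexivity.
Qed.

Definition on_sphere (n : nat) (v : Vec) : Prop :=
  (forall k, (n <= k)%nat -> v k = C0) /\
  rsum n (fun k => Cnorm2 (v k)) = 1.

Definition Sphere (n : nat) := { v : Vec | on_sphere n v }.

Definition sphere_top (n : nat) : topology (Sphere n) :=
  fun U => forall z, U z -> exists eps, 0 < eps /\
    forall w, sqrt (rsum n (fun k => Cnorm2 (Vsub (proj1_sig w) (proj1_sig z) k))) < eps
              -> U w.

Definition rot (q g : nat) (v : Vec) : Vec := fun k => Cmul (zeta_pow q g) (v k).

Lemma Cnorm2_rot q g c : Cnorm2 (Cmul (zeta_pow q g) c) = Cnorm2 c.
Proof.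
  unfold Cnorm2, Cmul, zeta_pow; simpl.
  set (t := 2 * PI * INR g / INR q).
  pose proof (sin2_cos2 t) as H. unfold Rsqr in H.
  destruct c as [x y]; simpl.
  transitivity ((sin t * sin t + cos t * cos t) * (x ^ 2 + y ^ 2)); [ring|].
  rewrite H; ring.
Qed.

Lemma on_sphere_rot n q g v : on_sphere n v -> on_sphere n (rot q g v).
Proof.
  intros [H1 H2]; split.
  - intros k Hk. unfold rot. rewrite H1 by exact Hk. unfold Cmul, C0; simpl.
    f_equal; ring.
  - rewrite <- H2. apply rsum_ext. intros k _. unfold rot. apply Cnorm2_rot.
Qed.

Definition sph_act {n q : nat} (z : Sphere n) (g : Zq q) : Sphere n :=
  exist _ (rot q (proj1_sig g) (proj1_sig z))
        (on_sphere_rot n q (proj1_sig g) _ (proj2_sig z)).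

(* S^infinity = union of the S^{2m-1}, with the weak (colimit) topology *)
Definition on_sphere_inf (v : Vec) : Prop := exists m, on_sphere m v.
Definition SphereInf := { v : Vec | on_sphere_inf v }.
Definition sph_incl {m : nat} (z : Sphere m) : SphereInf :=
  exist _ (proj1_sig z) (ex_intro _ m (proj2_sig z)).
Definition sphinf_top : topology SphereInf :=
  fun U => forall m, sphere_top m (fun z : Sphere m => U (sph_incl z)).

Lemma on_sphere_inf_rot q g v : on_sphere_inf v -> on_sphere_inf (rot q g v).
Proof. intros [m H]. exists m. apply on_sphere_rot, H. Qed.

Definition sphinf_act {q : nat} (z : SphereInf) (g : Zq q) : SphereInf :=
  exist _ (rot q (proj1_sig g) (proj1_sig z))
        (on_sphere_inf_rot q (proj1_sig g) _ (proj2_sig z)).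

Definition orbit {E : Type} {q : nat} (act : E -> Zq q -> E) (z : E) : E -> Prop :=
  fun w => exists g, w = act z g.
Definition OrbSpace {E : Type} {q : nat} (act : E -> Zq q -> E) :=
  { O : E -> Prop | exists z, O = orbit act z }.
Definition orb_map {E : Type} {q : nat} (act : E -> Zq q -> E) (z : E) : OrbSpace act :=
  exist _ (orbit act z) (ex_intro _ z eq_refl).
Definition orb_rep {E : Type} {q : nat} {act : E -> Zq q -> E} (x : OrbSpace act) : E :=
  proj1_sig (constructive_indefinite_description _ (proj2_sig x)).

Definition Lens (n q : nat) := OrbSpace (@sph_act n q).
Definition lens_p (n q : nat) : Sphere n -> Lens n q := orb_map (@sph_act n q).
Definition lens_top (n q : nat) : topology (Lens n q) :=
  quotient_top (sphere_top n) (lens_p n q).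

Definition LensInf (q : nat) := OrbSpace (@sphinf_act q).
Definition lensinf_p (q : nat) : SphereInf -> LensInf q := orb_map (@sphinf_act q).
Definition lensinf_top (q : nat) : topology (LensInf q) :=
  quotient_top sphinf_top (lensinf_p q).

Definition lens_incl {n q : nat} (x : Lens n q) : LensInf q :=
  lensinf_p q (sph_incl (orb_rep x)).

Definition Pullback {B E L : Type} (f : B -> L) (p : E -> L) :=
  { x : B * E | f (fst x) = p (snd x) }.
Definition pullback_top {B E L : Type} (TB : topology B) (TE : topology E)
  (f : B -> L) (p : E -> L) : topology (Pullback f p) :=
  subspace_top (prod_top TB TE) (fun x => f (fst x) = p (snd x)).

(* P --projP--> B (right Z_q-action actP) is isomorphic to f^*(E) = {(b,z) | f b = p z}
   (Z_q acting on the second factor via actE): an equivariant homeomorphism of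
   total spaces commuting with the projections. *)
Definition iso_to_pullback {B P E L : Type} {q : nat}
  (TB : topology B) (TP : topology P) (projP : P -> B) (actP : P -> Zq q -> P)
  (TE : topology E) (actE : E -> Zq q -> E) (p : E -> L) (f : B -> L) : Prop :=
  exists (h : P -> Pullback f p) (k : Pullback f p -> P),
    (forall x, k (h x) = x) /\ (forall y, h (k y) = y) /\
    continuous TP (pullback_top TB TE f p) h /\
    continuous (pullback_top TB TE f p) TP k /\
    (forall x, fst (proj1_sig (h x)) = projP x) /\
    (forall x m, proj1_sig (h (actP x m)) =
                 (fst (proj1_sig (h x)), actE (snd (proj1_sig (h x))) m)).

(* disjoint union  |_|_j U_j x {j} x Z_q  (indices j = 0..n-1) *)
Definition Tot (B : Type) (n q : nat) (U : nat -> B -> Prop) :=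
  { t : B * nat * Zq q | (snd (fst t) < n)%nat /\ U (snd (fst t)) (fst (fst t)) }.

(* each U_j with the subspace topology, Z_q discrete *)
Definition tot_top {B : Type} (TB : topology B) (n q : nat) (U : nat -> B -> Prop)
  : topology (Tot B n q U) :=
  fun W => forall (j : nat) (g : Zq q) (Hj : (j < n)%nat),
    exists O, TB O /\ forall b (Hb : U j b),
      (W (exist _ (b, j, g) (conj Hj Hb)) <-> O b).

(* (b,j,g) ~ (b,k,g + eta_jk) *)
Definition glue_rel {B : Type} {n q : nat} {U : nat -> B -> Prop}
  (eta : nat -> nat -> Zq q) (t t' : Tot B n q U) : Prop :=
  fst (fst (proj1_sig t)) = fst (fst (proj1_sig t')) /\
  proj1_sig (snd (proj1_sig t')) =
    ((proj1_sig (snd (proj1_sig t)) +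
      proj1_sig (eta (snd (fst (proj1_sig t))) (snd (fst (proj1_sig t'))))) mod q)%nat.

Definition glue_eq {B : Type} {n q : nat} {U : nat -> B -> Prop}
  (eta : nat -> nat -> Zq q) : relation (Tot B n q U) :=
  clos_refl_sym_trans _ (glue_rel eta).

Definition Peta {B : Type} (n q : nat) (U : nat -> B -> Prop) (eta : nat -> nat -> Zq q) :=
  { S : Tot B n q U -> Prop | exists t, S = glue_eq eta t }.

Definition peta_cls {B : Type} {n q : nat} {U : nat -> B -> Prop}
  (eta : nat -> nat -> Zq q) (t : Tot B n q U) : Peta n q U eta :=
  exist _ (glue_eq eta t) (ex_intro _ t eq_refl).

Definition peta_top {B : Type} (TB : topology B) (n q : nat) (U : nat -> B -> Prop)
  (eta : nat -> nat -> Zq q) : topology (Peta n q U eta) :=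
  quotient_top (tot_top TB n q U) (peta_cls eta).

Definition peta_rep {B : Type} {n q : nat} {U : nat -> B -> Prop}
  {eta : nat -> nat -> Zq q} (x : Peta n q U eta) : Tot B n q U :=
  proj1_sig (constructive_indefinite_description _ (proj2_sig x)).

Definition peta_proj {B : Type} {n q : nat} {U : nat -> B -> Prop}
  {eta : nat -> nat -> Zq q} (x : Peta n q U eta) : B :=
  fst (fst (proj1_sig (peta_rep x))).

Definition tot_shift {B : Type} {n q : nat} {U : nat -> B -> Prop}
  (t : Tot B n q U) (m : Zq q) : Tot B n q U :=
  exist _ (fst (proj1_sig t), zq_add (snd (proj1_sig t)) m) (proj2_sig t).

Definition peta_act {B : Type} {n q : nat} {U : nat -> B -> Prop}
  {eta : nat -> nat -> Zq q} (x : Peta n q U eta) (m : Zq q) : Peta n q U eta :=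
  peta_cls eta (tot_shift (peta_rep x) m).

Definition is_cocycle {B : Type} (n q : nat) (U : nat -> B -> Prop)
  (eta : nat -> nat -> Zq q) : Prop :=
  (forall j, (j < n)%nat -> (exists b, U j b) -> proj1_sig (eta j j) = 0%nat) /\
  (forall j k, (j < n)%nat -> (k < n)%nat -> (exists b, U j b /\ U k b) ->
     ((proj1_sig (eta k j) + proj1_sig (eta j k)) mod q = 0)%nat) /\
  (forall j k l, (j < n)%nat -> (k < n)%nat -> (l < n)%nat ->
     (exists b, U j b /\ U k b /\ U l b) ->
     ((proj1_sig (eta j k) + proj1_sig (eta k l)) mod q = proj1_sig (eta j l))%nat).

Definition chart_vec {B : Type} (n q : nat) (U : nat -> B -> Prop)
  (phi : nat -> B -> R) (eta : nat -> nat -> Zq q) (j : nat) (b : B) : Vec :=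
  fun k =>
    if Nat.ltb k n then
      if excluded_middle_informative (exists b', U j b' /\ U k b') then
        Cscale (sqrt (phi k b)) (zeta_pow q (proj1_sig (eta j k)))
      else C0
    else C0.

From Pilot Require Import Defs.
From Stdlib Require Import Reals.
Open Scope R_scope.
From Stdlib Require Import Lra Lia Relations ClassicalEpsilon Classical
  FunctionalExtensionality PropExtensionality ProofIrrelevance.
(* re-imported so that the complex numbers Defs.C shadow the binomial C of Reals *)
From Pilot Require Import Defs.

(* For b in U_j the chart vector v_j(b) = (sqrt(phi_k b) zeta^{eta_jk})_k lies on S^{2n-1}
   because sum_k phi_k = 1, and by the cocycle identity eta_lk = eta_lj + eta_jk the charts
   over U_j and U_l differ by the rotation zeta^{eta_lj}.  Hence their classes in L^n_q agree
   and define f = lens_map, continuous because each v_j is.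

   The isomorphism P_eta = f^*E comes from a general criterion (pullback_criterion): if maps
   c_j : U_j -> E land over f, are glued by eta, meet each fibre in a free transitive orbit,
   are continuous, and form an open "tube" in the pullback, then [b,j,g] |-> (b, c_j(b).g)
   is an equivariant homeomorphism.  For E = S^{2n-1}, c_j = v_j, the tube condition holds
   because distinct roots of unity are uniformly separated; the case E = S^infty follows
   through the inclusion S^{2n-1} -> S^infty and balls that are open in its weak topology. *)

Lemma C_eq (a b : C) : fst a = fst b -> snd a = snd b -> a = b.
Proof. destruct a, b; simpl; intros; subst; reflexivity. Qed.

Lemma Cmul_1l (c : C) : Cmul (1, 0) c = c.
Proof. destruct c; unfold Cmul; apply C_eq; simpl; ring. Qed.

Lemma Cmul_assoc (a b c : C) : Cmul a (Cmul b c) = Cmul (Cmul a b) c.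
Proof. destruct a, b, c; unfold Cmul; apply C_eq; simpl; ring. Qed.

Lemma Cnorm2_mul (a b : C) : Cnorm2 (Cmul a b) = Cnorm2 a * Cnorm2 b.
Proof. destruct a, b; unfold Cnorm2, Cmul; simpl; ring. Qed.

Lemma Cnorm2_Cscale (r : R) (c : C) : Cnorm2 (Cscale r c) = r ^ 2 * Cnorm2 c.
Proof. unfold Cnorm2, Cscale; simpl; ring. Qed.

Lemma Cnorm2_nonneg (a : C) : 0 <= Cnorm2 a.
Proof. destruct a; unfold Cnorm2; simpl. nra. Qed.

Definition Csub (a b : C) : C := (fst a - fst b, snd a - snd b).

Lemma Csub_norm_pos (a b : C) : a <> b -> 0 < Cnorm2 (Csub a b).
Proof.
  intros Hab. destruct a as [x y], b as [x' y']; unfold Cnorm2, Csub; simpl.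
  destruct (Req_dec x x') as [<-|Hx]; [destruct (Req_dec y y') as [<-|Hy]|].
  - contradiction.
  - assert (0 < Rsqr (y - y')) by (apply Rsqr_pos_lt; lra). unfold Rsqr in *.
    replace (x - x) with 0 by ring. nra.
  - assert (0 < Rsqr (x - x')) by (apply Rsqr_pos_lt; lra). unfold Rsqr in *.
    pose proof (pow2_ge_0 (y - y')). nra.
Qed.

Lemma zeta_add (q a b : nat) : zeta_pow q (a + b) = Cmul (zeta_pow q a) (zeta_pow q b).
Proof.
  unfold zeta_pow, Cmul; simpl.
  replace (2 * PI * INR (a + b) / INR q)
    with (2 * PI * INR a / INR q + 2 * PI * INR b / INR q)
    by (rewrite plus_INR; unfold Rdiv; ring).
  rewrite cos_plus, sin_plus. apply C_eq; simpl; ring.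
Qed.

Lemma zeta_0 (q : nat) : zeta_pow q 0 = (1, 0).
Proof.
  unfold zeta_pow. replace (2 * PI * INR 0 / INR q) with 0 by (simpl; unfold Rdiv; ring).
  rewrite cos_0, sin_0; reflexivity.
Qed.

Lemma zeta_mult (q t : nat) : (0 < q)%nat -> zeta_pow q (q * t) = (1, 0).
Proof.
  intros Hq. unfold zeta_pow.
  assert (Hq' : INR q <> 0) by (apply not_0_INR; lia).
  replace (2 * PI * INR (q * t) / INR q) with (0 + 2 * INR t * PI)
    by (rewrite mult_INR; field; exact Hq').
  rewrite cos_period, sin_period, cos_0, sin_0. reflexivity.
Qed.

Lemma zeta_mod (q a : nat) : (0 < q)%nat -> zeta_pow q (a mod q) = zeta_pow q a.
Proof.
  intros Hq. rewrite (Nat.div_mod_eq a q) at 2.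
  rewrite zeta_add, zeta_mult by exact Hq. rewrite Cmul_1l. reflexivity.
Qed.

Lemma zeta_norm (q g : nat) : Cnorm2 (zeta_pow q g) = 1.
Proof.
  unfold Cnorm2, zeta_pow; simpl.
  pose proof (sin2_cos2 (2 * PI * INR g / INR q)) as H. unfold Rsqr in H. lra.
Qed.

Lemma cos_eq_1_0 (t : R) : 0 <= t < 2 * PI -> cos t = 1 -> t = 0.
Proof.
  intros [H1 H2] H. destruct (Req_dec t 0) as [|Hne]; [assumption|].
  assert (Ht : 0 < t / 2 < PI) by lra.
  pose proof (sin_gt_0 (t/2) (proj1 Ht) (proj2 Ht)) as Hs.
  pose proof (cos_2a_sin (t/2)) as Hc. replace (2 * (t/2)) with t in Hc by field.
  exfalso. nra.
Qed.

Lemma zeta_inj_le (q a b : nat) : (a <= b)%nat -> (b < q)%nat ->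
  zeta_pow q a = zeta_pow q b -> a = b.
Proof.
  intros Hab Hb H. unfold zeta_pow in H. injection H as Hc Hs.
  assert (Hq : 0 < INR q) by (apply lt_0_INR; lia).
  pose proof PI_RGT_0.
  assert (INR a <= INR b) by (apply le_INR; exact Hab).
  assert (INR b < INR q) by (apply lt_INR; exact Hb).
  set (x := 2 * PI * INR a / INR q) in *. set (y := 2 * PI * INR b / INR q) in *.
  assert (Hdiff : y - x = 2 * PI * (INR b - INR a) / INR q) by (unfold x, y; field; lra).
  assert (Hcos : cos (y - x) = 1).
  { rewrite cos_minus, <- Hc, <- Hs. pose proof (sin2_cos2 x) as S. unfold Rsqr in S. lra. }
  assert (Hrange : 0 <= y - x < 2 * PI).
  { rewrite Hdiff. split.
    - apply Rmult_le_pos; [nra|]. left; apply Rinv_0_lt_compat; lra.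
    - apply (Rmult_lt_reg_r (INR q)); [lra|].
      replace (2 * PI * (INR b - INR a) / INR q * INR q) with (2 * PI * (INR b - INR a))
        by (field; lra). pose proof (pos_INR a). nra. }
  apply cos_eq_1_0 in Hcos; [|exact Hrange].
  rewrite Hdiff in Hcos. apply INR_eq.
  assert (E : (INR b - INR a) * (2 * PI / INR q) = 0) by (rewrite <- Hcos; field; lra).
  apply Rmult_integral in E. destruct E as [E|E]; [lra|].
  exfalso. assert (0 < 2 * PI / INR q) by (apply Rdiv_lt_0_compat; lra). lra.
Qed.

Lemma zeta_inj (q g g' : nat) : (g < q)%nat -> (g' < q)%nat ->
  zeta_pow q g = zeta_pow q g' -> g = g'.
Proof.
  intros Hg Hg' H. destruct (Nat.le_ge_cases g g').
  - apply (zeta_inj_le q); assumption.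
  - symmetry; apply (zeta_inj_le q); auto.
Qed.

Lemma rot_add (q a b : nat) (v : Vec) : rot q a (rot q b v) = rot q (a + b) v.
Proof.
  apply functional_extensionality; intro k. unfold rot.
  rewrite Cmul_assoc, zeta_add. reflexivity.
Qed.

Lemma rot_mod (q a : nat) (v : Vec) : (0 < q)%nat -> rot q (a mod q) v = rot q a v.
Proof. intros Hq. unfold rot. rewrite zeta_mod by exact Hq. reflexivity. Qed.

Lemma rot_0 (q : nat) (v : Vec) : rot q 0 v = v.
Proof.
  apply functional_extensionality; intro k. unfold rot. rewrite zeta_0, Cmul_1l. reflexivity.
Qed.

Lemma rsum_nonneg (n : nat) (f : nat -> R) :
  (forall k, (k < n)%nat -> 0 <= f k) -> 0 <= rsum n f.
Proof.
  induction n; simpl; intros H; [lra|].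
  pose proof (IHn (fun k Hk => H k ltac:(lia))). pose proof (H n ltac:(lia)). lra.
Qed.

Lemma rsum_le (n : nat) (f g : nat -> R) :
  (forall k, (k < n)%nat -> f k <= g k) -> rsum n f <= rsum n g.
Proof.
  induction n; simpl; intros H; [lra|].
  pose proof (IHn (fun k Hk => H k ltac:(lia))). pose proof (H n ltac:(lia)). lra.
Qed.

Lemma rsum_plus (n : nat) (f g : nat -> R) : rsum n (fun k => f k + g k) = rsum n f + rsum n g.
Proof. induction n; simpl; [ring|]. rewrite IHn. ring. Qed.

Lemma rsum_scal (n : nat) (c : R) (f : nat -> R) : rsum n (fun k => c * f k) = c * rsum n f.
Proof. induction n; simpl; [ring|]. rewrite IHn. ring. Qed.

Lemma rsum_zero (n : nat) : rsum n (fun _ => 0) = 0.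
Proof. induction n; simpl; [reflexivity|]. rewrite IHn. ring. Qed.

Lemma rsum_bound (n : nat) (f : nat -> R) (d : R) :
  (forall k, (k < n)%nat -> f k <= d) -> rsum n f <= INR n * d.
Proof.
  induction n; cbn [rsum]; intros H; [simpl; lra|].
  pose proof (IHn (fun k Hk => H k ltac:(lia))). pose proof (H n ltac:(lia)).
  rewrite S_INR. lra.
Qed.

Lemma rsum_extend (N M : nat) (f : nat -> R) : (N <= M)%nat ->
  (forall k, (N <= k)%nat -> f k = 0) -> rsum M f = rsum N f.
Proof.
  intros HNM H. induction HNM; [reflexivity|]. simpl. rewrite IHHNM, H by lia. ring.
Qed.

Definition Dn (N : nat) (v w : Vec) : R := rsum N (fun k => Cnorm2 (Vsub v w k)).

Lemma Dn_nonneg (N : nat) (v w : Vec) : 0 <= Dn N v w.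
Proof. apply rsum_nonneg; intros; apply Cnorm2_nonneg. Qed.

Lemma Dn_self (N : nat) (v : Vec) : Dn N v v = 0.
Proof.
  unfold Dn. rewrite <- (rsum_zero N). apply rsum_ext; intros k _.
  unfold Vsub, Cnorm2; simpl. ring.
Qed.

Lemma Dn_sym (N : nat) (v w : Vec) : Dn N v w = Dn N w v.
Proof. unfold Dn. apply rsum_ext; intros k _. unfold Cnorm2, Vsub; simpl. ring. Qed.

Lemma Dn_rot (N q g : nat) (v w : Vec) : Dn N (rot q g v) (rot q g w) = Dn N v w.
Proof.
  unfold Dn. apply rsum_ext; intros k _. unfold rot.
  replace (Vsub (fun k0 => Cmul (zeta_pow q g) (v k0)) (fun k0 => Cmul (zeta_pow q g) (w k0)) k)
    with (Cmul (zeta_pow q g) (Vsub v w k)) by (unfold Vsub, Cmul; apply C_eq; simpl; ring).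
  rewrite Cnorm2_mul, zeta_norm. ring.
Qed.

Lemma Dn_rot_diff (N q g g' : nat) (v : Vec) :
  Dn N (rot q g v) (rot q g' v) =
  Cnorm2 (Csub (zeta_pow q g) (zeta_pow q g')) * rsum N (fun k => Cnorm2 (v k)).
Proof.
  unfold Dn. rewrite <- rsum_scal. apply rsum_ext; intros k _. unfold rot.
  replace (Vsub (fun k0 => Cmul (zeta_pow q g) (v k0)) (fun k0 => Cmul (zeta_pow q g') (v k0)) k)
    with (Cmul (Csub (zeta_pow q g) (zeta_pow q g')) (v k))
    by (unfold Vsub, Cmul, Csub; apply C_eq; simpl; ring).
  rewrite Cnorm2_mul. ring.
Qed.

Lemma sq_tri (s u w : R) : 0 < s -> (u + w) ^ 2 <= (1 + s) * w ^ 2 + (1 + / s) * u ^ 2.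
Proof.
  intros Hs.
  assert (E : (1 + s) * w ^ 2 + (1 + / s) * u ^ 2 - (u + w) ^ 2 = (s * w - u) ^ 2 / s)
    by (field; lra).
  assert (0 <= (s * w - u) ^ 2 / s).
  { apply Rmult_le_pos; [apply pow2_ge_0|]. left; apply Rinv_0_lt_compat; lra. }
  lra.
Qed.

Lemma Dn_tri (N : nat) (s : R) (a b c : Vec) : 0 < s ->
  Dn N a c <= (1 + s) * Dn N b c + (1 + / s) * Dn N a b.
Proof.
  intros Hs. unfold Dn. rewrite <- !rsum_scal, <- rsum_plus. apply rsum_le; intros k _.
  unfold Cnorm2, Vsub; simpl.
  pose proof (sq_tri s (fst (a k) - fst (b k)) (fst (b k) - fst (c k)) Hs).
  pose proof (sq_tri s (snd (a k) - snd (b k)) (snd (b k) - snd (c k)) Hs).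
  replace (fst (a k) - fst (c k)) with ((fst (a k) - fst (b k)) + (fst (b k) - fst (c k))) by ring.
  replace (snd (a k) - snd (c k)) with ((snd (a k) - snd (b k)) + (snd (b k) - snd (c k))) by ring.
  lra.
Qed.

(* if D0 < R then every y dominated by all the bounds (1+s) D0 + (1+1/s) x with x small
   stays below R: the numerical core of "metric balls are open" *)
Lemma ball_num (D0 R : R) : 0 <= D0 < R -> exists e, 0 < e /\
  forall x y, 0 <= x -> sqrt x < e ->
    (forall s, 0 < s -> y <= (1 + s) * D0 + (1 + / s) * x) -> y < R.
Proof.
  intros [H0 H1]. set (s := (R - D0) / (2 * R)).
  assert (Hs : 0 < s) by (unfold s; apply Rdiv_lt_0_compat; lra).
  assert (Hs' : 0 < 1 + / s) by (pose proof (Rinv_0_lt_compat s Hs); lra).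
  set (c := (R - D0) / (2 * (1 + / s))).
  assert (Hc : 0 < c) by (unfold c; apply Rdiv_lt_0_compat; lra).
  exists (sqrt c). split; [apply sqrt_lt_R0; exact Hc|].
  intros x y Hx Hxe Hy. specialize (Hy s Hs). apply sqrt_lt_0_alt in Hxe.
  assert (E1 : (1 + / s) * x < (R - D0) / 2).
  { apply (Rmult_lt_compat_l (1 + / s)) in Hxe; [|exact Hs'].
    replace ((1 + / s) * c) with ((R - D0) / 2) in Hxe by (unfold c; field; lra). exact Hxe. }
  assert (E2 : s * D0 <= (R - D0) / 2).
  { unfold s. replace ((R - D0) / (2 * R) * D0) with (((R - D0) / 2) * (D0 / R)) by (field; lra).
    assert (D0 / R <= 1).
    { apply (Rmult_le_reg_r R); [lra|]. replace (D0 / R * R) with D0 by (field; lra). lra. }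
    assert (0 <= (R - D0) / 2) by lra. nra. }
  lra.
Qed.

Lemma ball_open (n : nat) (x0 : Vec) (R : R) : sphere_top n (fun w => Dn n (proj1_sig w) x0 < R).
Proof.
  intros z Hz. destruct (ball_num (Dn n (proj1_sig z) x0) R) as [e [He Hb]].
  { split; [apply Dn_nonneg|exact Hz]. }
  exists e; split; [exact He|]. intros w Hw.
  apply (Hb (Dn n (proj1_sig w) (proj1_sig z))); [apply Dn_nonneg|exact Hw|].
  intros s Hs. apply Dn_tri. exact Hs.
Qed.

Lemma Dn_extend (N M : nat) (v w : Vec) : (N <= M)%nat -> (forall k, (N <= k)%nat -> v k = C0) ->
  (forall k, (N <= k)%nat -> w k = C0) -> Dn M v w = Dn N v w.
Proof.
  intros HNM Hv Hw. unfold Dn. apply rsum_extend; [exact HNM|].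
  intros k Hk. unfold Vsub. rewrite Hv, Hw by exact Hk. unfold Cnorm2, C0; simpl; ring.
Qed.

Lemma sphere_ball (n : nat) (O : Sphere n -> Prop) (z : Sphere n) : sphere_top n O -> O z ->
  exists e, 0 < e /\ forall w, Dn n (proj1_sig w) (proj1_sig z) < e -> O w.
Proof.
  intros HO Oz. destruct (HO z Oz) as [e [He H]]. exists (e * e); split; [nra|].
  intros w Hw. apply H. rewrite <- (sqrt_square e) by lra. apply sqrt_lt_1_alt.
  split; [apply Dn_nonneg|exact Hw].
Qed.

Lemma uniform_pos_bound (N : nat) (P : nat -> R -> Prop) :
  (forall a c c', c' <= c -> P a c -> P a c') ->
  (forall a, (a < N)%nat -> exists c, 0 < c /\ P a c) ->
  exists c, 0 < c /\ forall a, (a < N)%nat -> P a c.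
Proof.
  intros Hmono. induction N as [|N IH]; intros H.
  - exists 1; split; [lra|]. intros; lia.
  - destruct IH as [c [Hc Hall]]; [intros a Ha; apply H; lia|].
    destruct (H N ltac:(lia)) as [d [Hd HN]].
    exists (Rmin c d). split; [apply Rmin_pos; assumption|]. intros a Ha.
    destruct (Nat.eq_dec a N) as [->|Hne].
    + apply Hmono with d; [apply Rmin_r|exact HN].
    + apply Hmono with c; [apply Rmin_l|apply Hall; lia].
Qed.

Lemma zeta_sep (q : nat) : exists c, 0 < c /\ forall a b, (a < q)%nat -> (b < q)%nat -> a <> b ->
  c <= Cnorm2 (Csub (zeta_pow q a) (zeta_pow q b)).
Proof.
  set (F a b := Cnorm2 (Csub (zeta_pow q a) (zeta_pow q b))).
  assert (Hrow : forall a, (a < q)%nat ->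
            exists c, 0 < c /\ forall b, (b < q)%nat -> a <> b -> c <= F a b).
  { intros a Ha. apply (uniform_pos_bound q (fun b c => a <> b -> c <= F a b)).
    { intros b c c' Hc H Hab. specialize (H Hab). lra. }
    intros b Hb. destruct (Nat.eq_dec a b) as [->|Hab].
    - exists 1; split; [lra|]. intros []; reflexivity.
    - exists (F a b). split; [|intros; lra].
      apply Csub_norm_pos. intro E. apply Hab. apply (zeta_inj q); assumption. }
  destruct (uniform_pos_bound q (fun a c => forall b, (b < q)%nat -> a <> b -> c <= F a b))
    as [c [Hc Hall]]; [|exact Hrow|].
  - intros a c c' Hc H b Hb Hab. specialize (H b Hb Hab). lra.
  - exists c; split; [exact Hc|]. intros a b Ha; apply Hall, Ha.
Qed.

Lemma rot_sep (n q : nat) : exists c, 0 < c /\ forall v a b, on_sphere n v ->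
  (a < q)%nat -> (b < q)%nat -> a <> b -> c <= Dn n (rot q a v) (rot q b v).
Proof.
  destruct (zeta_sep q) as [c [Hc H]]. exists c; split; [exact Hc|].
  intros v a b [_ Hs] Ha Hb Hab. rewrite Dn_rot_diff, Hs, Rmult_1_r. apply H; auto.
Qed.

Lemma rot_inj (n q : nat) (v : Vec) (g g' : nat) : on_sphere n v -> (g < q)%nat -> (g' < q)%nat ->
  rot q g v = rot q g' v -> g = g'.
Proof.
  intros Hv Hg Hg' E. destruct (Nat.eq_dec g g') as [|Hne]; [assumption|exfalso].
  destruct (rot_sep n q) as [c [Hc Hsep]]. pose proof (Hsep v g g' Hv Hg Hg' Hne).
  rewrite E, Dn_self in H. lra.
Qed.

Lemma orbit_match (n q : nat) (c : R) (v v0 : Vec) (g g' : nat) : 0 < c ->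
  (forall v a b, on_sphere n v -> (a < q)%nat -> (b < q)%nat -> a <> b ->
     c <= Dn n (rot q a v) (rot q b v)) ->
  on_sphere n v -> (g < q)%nat -> (g' < q)%nat ->
  Dn n v v0 < c / 4 -> Dn n (rot q g' v) (rot q g v0) < c / 4 -> g' = g.
Proof.
  intros Hc Hsep Hv Hg Hg' H1 H2.
  destruct (Nat.eq_dec g' g) as [E|Hne]; [exact E|exfalso].
  pose proof (Hsep v g' g Hv Hg' Hg Hne).
  pose proof (Dn_tri n 1 (rot q g' v) (rot q g v0) (rot q g v) ltac:(lra)) as T.
  replace (/ 1) with 1 in T by field.
  rewrite (Dn_sym n (rot q g v0) (rot q g v)), Dn_rot in T. lra.
Qed.

Lemma sig_eq {A : Type} {P : A -> Prop} (x y : {a | P a}) : proj1_sig x = proj1_sig y -> x = y.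
Proof. destruct x, y; simpl; intros; subst; f_equal; apply proof_irrelevance. Qed.

Lemma zq_eq {q : nat} (g h : Zq q) : proj1_sig g = proj1_sig h -> g = h.
Proof. apply sig_eq. Qed.

Definition zq_zero (q : nat) (Hq : (0 < q)%nat) : Zq q := exist _ 0%nat Hq.

Lemma zq_solve (q : nat) (g h : Zq q) : exists m, zq_add g m = h.
Proof.
  destruct g as [g Hg], h as [h Hh].
  assert (Hm : ((h + (q - g)) mod q < q)%nat) by (apply Nat.mod_upper_bound; lia).
  exists (exist (fun x => (x < q)%nat) _ Hm). apply zq_eq; simpl.
  rewrite Nat.Div0.add_mod_idemp_r.
  replace (g + (h + (q - g)))%nat with (h + 1 * q)%nat by lia.
  rewrite Nat.Div0.mod_add. apply Nat.mod_small; exact Hh.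
Qed.

Lemma zq_cancel (q : nat) (g a d : Zq q) : ((proj1_sig a + proj1_sig d) mod q = 0)%nat ->
  zq_add a (zq_add g d) = g.
Proof.
  intros E. apply zq_eq. destruct g as [g Hg], a as [a Ha], d as [d Hd]; simpl in *.
  rewrite Nat.Div0.add_mod_idemp_r.
  replace (a + (g + d))%nat with (g + (a + d))%nat by lia.
  rewrite <- Nat.Div0.add_mod_idemp_r, E, Nat.add_0_r. apply Nat.mod_small; exact Hg.
Qed.

Section Orbits.
Variables (E : Type) (q : nat) (act : E -> Zq q -> E).
Hypothesis Hq : (0 < q)%nat.
Hypothesis Hact : forall z g m, act (act z g) m = act z (zq_add g m).
Hypothesis Hact0 : forall z, act z (zq_zero q Hq) = z.

Lemma orbit_act (z : E) (g : Zq q) : orbit act (act z g) = orbit act z.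
Proof.
  apply functional_extensionality; intro x. apply propositional_extensionality. split.
  - intros [h ->]. rewrite Hact. eexists; reflexivity.
  - intros [h ->]. destruct (zq_solve q g h) as [m Hm]. exists m. rewrite Hact, Hm. reflexivity.
Qed.

Lemma orb_map_eq (z w : E) : orb_map act z = orb_map act w <-> exists g, z = act w g.
Proof.
  split.
  - intros Ee. apply (f_equal (@proj1_sig _ _)) in Ee. simpl in Ee.
    assert (Hz : orbit act z z) by (exists (zq_zero q Hq); symmetry; apply Hact0).
    rewrite Ee in Hz. exact Hz.
  - intros [g ->]. apply sig_eq. simpl. apply orbit_act.
Qed.

End Orbits.

Lemma orb_rep_spec {E : Type} {q : nat} (act : E -> Zq q -> E) (x : OrbSpace act) :
  orb_map act (orb_rep x) = x.
Proof.
  apply sig_eq. unfold orb_rep.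
  destruct (constructive_indefinite_description _ _) as [z Hz]. simpl. symmetry; exact Hz.
Qed.

Lemma sph_act_comp (n q : nat) (z : Sphere n) (g m : Zq q) : (0 < q)%nat ->
  sph_act (sph_act z g) m = sph_act z (zq_add g m).
Proof.
  intros Hq. apply sig_eq; simpl. rewrite rot_add, rot_mod by exact Hq. f_equal. lia.
Qed.

Lemma sph_act_zero (n q : nat) (Hq : (0 < q)%nat) (z : Sphere n) : sph_act z (zq_zero q Hq) = z.
Proof. apply sig_eq; simpl. apply rot_0. Qed.

Lemma sphinf_act_comp (q : nat) (z : SphereInf) (g m : Zq q) : (0 < q)%nat ->
  sphinf_act (sphinf_act z g) m = sphinf_act z (zq_add g m).
Proof.
  intros Hq. apply sig_eq; simpl. rewrite rot_add, rot_mod by exact Hq. f_equal. lia.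
Qed.

Lemma sphinf_act_zero (q : nat) (Hq : (0 < q)%nat) (z : SphereInf) :
  sphinf_act z (zq_zero q Hq) = z.
Proof. apply sig_eq; simpl. apply rot_0. Qed.

Lemma incl_act (n q : nat) (z : Sphere n) (g : Zq q) :
  sph_incl (sph_act z g) = sphinf_act (sph_incl z) g.
Proof. apply sig_eq; reflexivity. Qed.

Lemma open_local {X : Type} (T : topology X) (S : X -> Prop) : is_topology T ->
  (forall x, S x -> exists O, T O /\ O x /\ forall y, O y -> S y) -> T S.
Proof.
  intros [_ [_ HU]] H.
  assert (E : S = (fun x => exists O, (T O /\ forall y, O y -> S y) /\ O x)).
  { apply functional_extensionality; intro x. apply propositional_extensionality; split.
    - intros Hx. destruct (H x Hx) as [O [HO [Ox HS]]]. exists O; auto.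
    - intros [O [[_ HS] Ox]]. auto. }
  rewrite E. apply HU. intros O [HO _]; exact HO.
Qed.

Lemma open_inter {X : Type} (T : topology X) (O1 O2 : X -> Prop) :
  is_topology T -> T O1 -> T O2 -> T (fun x => O1 x /\ O2 x).
Proof. intros [_ [HI _]]. apply HI. Qed.

Lemma Rball_open (x0 d : R) : R_top (fun y => Rabs (y - x0) < d).
Proof.
  intros x Hx. exists (d - Rabs (x - x0)); split; [lra|].
  intros y Hy. pose proof (Rabs_triang (y - x) (x - x0)).
  replace (y - x + (x - x0)) with (y - x0) in H by ring. lra.
Qed.

Lemma finite_nbhd {B : Type} (TB : topology B) (n : nat) (phi : nat -> B -> R) :
  is_topology TB -> (forall j, (j < n)%nat -> continuous TB R_top (phi j)) ->
  forall b0 d, 0 < d -> exists N, TB N /\ N b0 /\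
    forall b, N b -> forall k, (k < n)%nat -> Rabs (phi k b - phi k b0) < d.
Proof.
  intros HT Hc b0 d Hd.
  enough (G : forall m, (m <= n)%nat -> exists N, TB N /\ N b0 /\
    forall b, N b -> forall k, (k < m)%nat -> Rabs (phi k b - phi k b0) < d) by (apply G; lia).
  induction m; intros Hm.
  - exists (fun _ => True). split; [apply HT|]. split; [exact I|]. intros; lia.
  - destruct IHm as [N [HN [Nb HNk]]]; [lia|].
    exists (fun b => N b /\ Rabs (phi m b - phi m b0) < d). split; [|split].
    + apply open_inter; [exact HT|exact HN|].
      apply (Hc m ltac:(lia) _ (Rball_open (phi m b0) d)).
    + split; [exact Nb|]. rewrite Rminus_diag, Rabs_R0; exact Hd.
    + intros b [Nb' Hm'] k Hk. destruct (Nat.eq_dec k m) as [->|Hne]; [exact Hm'|].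
      apply HNk; [exact Nb'|lia].
Qed.

Definition tot_b {B : Type} {n q : nat} {U : nat -> B -> Prop} (t : Tot B n q U) : B :=
  fst (fst (proj1_sig t)).
Definition tot_j {B : Type} {n q : nat} {U : nat -> B -> Prop} (t : Tot B n q U) : nat :=
  snd (fst (proj1_sig t)).
Definition tot_g {B : Type} {n q : nat} {U : nat -> B -> Prop} (t : Tot B n q U) : Zq q :=
  snd (proj1_sig t).

Lemma cls_eq {B : Type} {n q : nat} {U : nat -> B -> Prop} (eta : nat -> nat -> Zq q)
  (t t' : Tot B n q U) : glue_eq eta t t' -> peta_cls eta t = peta_cls eta t'.
Proof.
  intros H. apply sig_eq; simpl. apply functional_extensionality; intro x.
  apply propositional_extensionality; split; intros Hx.
  - apply rst_trans with t; [apply rst_sym; exact H|exact Hx].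
  - apply rst_trans with t'; [exact H|exact Hx].
Qed.

Lemma rep_cls {B : Type} {n q : nat} {U : nat -> B -> Prop} (eta : nat -> nat -> Zq q)
  (x : Peta n q U eta) : peta_cls eta (peta_rep x) = x.
Proof.
  apply sig_eq. unfold peta_rep.
  destruct (constructive_indefinite_description _ _) as [t Ht]. simpl. symmetry; exact Ht.
Qed.

Lemma cls_rep {B : Type} {n q : nat} {U : nat -> B -> Prop} (eta : nat -> nat -> Zq q)
  (t : Tot B n q U) : glue_eq eta t (peta_rep (peta_cls eta t)).
Proof.
  pose proof (rep_cls eta (peta_cls eta t)) as E.
  apply (f_equal (@proj1_sig _ _)) in E. simpl in E. rewrite <- E. apply rst_refl.
Qed.

Section Pullback_criterion.
Variables (B : Type) (TB : topology B) (n q : nat) (U : nat -> B -> Prop)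
  (eta : nat -> nat -> Zq q) (E L : Type) (TE : topology E) (act : E -> Zq q -> E)
  (p : E -> L) (f : B -> L) (c : nat -> B -> E).
Hypothesis HT : is_topology TB.
Hypothesis HU : forall j, (j < n)%nat -> TB (U j).
Hypothesis Hcov : forall b, exists j, (j < n)%nat /\ U j b.
Hypothesis Hact : forall z g m, act (act z g) m = act z (zq_add g m).
Hypothesis Hfibre : forall j b g, (j < n)%nat -> U j b -> p (act (c j b) g) = f b.
Hypothesis Hglue : forall j k b g, (j < n)%nat -> (k < n)%nat -> U j b -> U k b ->
  act (c j b) g = act (c k b) (zq_add g (eta j k)).
Hypothesis Hfree : forall j b g g', (j < n)%nat -> U j b ->
  act (c j b) g = act (c j b) g' -> g = g'.
Hypothesis Htrans : forall j b z, (j < n)%nat -> U j b -> p z = f b ->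
  exists g, z = act (c j b) g.
Hypothesis Hcont : forall j g b0 O2, (j < n)%nat -> U j b0 -> TE O2 -> O2 (act (c j b0) g) ->
  exists N, TB N /\ N b0 /\ forall b, N b -> U j b -> O2 (act (c j b) g).
Hypothesis Htube : forall j g b0, (j < n)%nat -> U j b0 -> exists N O2, TB N /\ TE O2 /\
  N b0 /\ O2 (act (c j b0) g) /\
  forall b z, N b -> U j b -> O2 z -> p z = f b -> z = act (c j b) g.

Definition tot_point (t : Tot B n q U) : E := act (c (tot_j t) (tot_b t)) (tot_g t).

Lemma tot_point_glue (t t' : Tot B n q U) :
  glue_eq eta t t' -> tot_b t = tot_b t' /\ tot_point t = tot_point t'.
Proof.
  intros H. induction H as [t t' Hr|t|t t' _ [IH1 IH2]|t t' t'' _ [IH1 IH2] _ [IH3 IH4]].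
  - destruct t as [[[b j] g] [Hj Hb]], t' as [[[b' j'] g'] [Hj' Hb']].
    destruct Hr as [Hbb Hgg]. simpl in Hbb, Hgg. subst b'. split; [reflexivity|].
    unfold tot_point, tot_j, tot_b, tot_g; simpl.
    rewrite (Hglue j j' b g Hj Hj' Hb Hb'). f_equal. apply zq_eq. simpl. symmetry; exact Hgg.
  - split; reflexivity.
  - split; symmetry; assumption.
  - split; etransitivity; eauto.
Qed.

Lemma cls_of_point (t t' : Tot B n q U) :
  tot_b t = tot_b t' -> tot_point t = tot_point t' -> peta_cls eta t = peta_cls eta t'.
Proof.
  intros Hb Hh. apply cls_eq.
  destruct t as [[[b j] g] [Hj Hbj]], t' as [[[b' j'] g'] [Hj' Hbj']].
  unfold tot_b in Hb; simpl in Hb. subst b'.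
  unfold tot_point, tot_j, tot_b, tot_g in Hh; simpl in Hh.
  rewrite (Hglue j j' b g Hj Hj' Hbj Hbj') in Hh.
  apply (Hfree j' b _ _ Hj' Hbj') in Hh.
  apply rst_step. split; [reflexivity|]. rewrite <- Hh. reflexivity.
Qed.

Lemma rep_cls_point (t : Tot B n q U) :
  tot_b (peta_rep (peta_cls eta t)) = tot_b t /\
  tot_point (peta_rep (peta_cls eta t)) = tot_point t.
Proof. destruct (tot_point_glue _ _ (cls_rep eta t)); split; symmetry; assumption. Qed.

Lemma tot_point_fibre (t : Tot B n q U) : f (tot_b t) = p (tot_point t).
Proof. symmetry. apply Hfibre; apply (proj2_sig t). Qed.

Definition to_pullback (x : Peta n q U eta) : Pullback f p :=
  exist _ (tot_b (peta_rep x), tot_point (peta_rep x)) (tot_point_fibre (peta_rep x)).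

Lemma pullback_lift_ex (y : Pullback f p) :
  exists t, tot_b t = fst (proj1_sig y) /\ tot_point t = snd (proj1_sig y).
Proof.
  destruct y as [[b z] Hy]; simpl in *.
  destruct (Hcov b) as [j [Hj Hb]].
  destruct (Htrans j b z Hj Hb (eq_sym Hy)) as [g Hg].
  exists (exist _ ((b, j), g) (conj Hj Hb)). split; [reflexivity|]. symmetry; exact Hg.
Qed.

Definition pullback_lift (y : Pullback f p) :
  {t | tot_b t = fst (proj1_sig y) /\ tot_point t = snd (proj1_sig y)} :=
  constructive_indefinite_description _ (pullback_lift_ex y).

Definition of_pullback (y : Pullback f p) : Peta n q U eta :=
  peta_cls eta (proj1_sig (pullback_lift y)).

Lemma of_to_pullback (x : Peta n q U eta) : of_pullback (to_pullback x) = x.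
Proof.
  unfold of_pullback. destruct (pullback_lift (to_pullback x)) as [t [Hb Hh]]; simpl in *.
  rewrite <- (rep_cls eta x). apply cls_of_point; assumption.
Qed.

Lemma to_of_pullback (y : Pullback f p) : to_pullback (of_pullback y) = y.
Proof.
  unfold of_pullback. destruct (pullback_lift y) as [t [Hb Hh]]; simpl.
  apply sig_eq; simpl. destruct (rep_cls_point t) as [E1 E2]. rewrite E1, E2, Hb, Hh.
  destruct (proj1_sig y); reflexivity.
Qed.

Lemma to_pullback_continuous :
  continuous (peta_top TB n q U eta) (pullback_top TB TE f p) to_pullback.
Proof.
  intros V [W [HW HV]] j g Hj.
  exists (fun b => U j b /\ W (b, act (c j b) g)). split.
  - apply open_local; [exact HT|]. intros b0 [Hb0 HW0].
    destruct (HW _ HW0) as [O1 [O2 [HO1 [HO2 [O1b [O2z Hbox]]]]]]. simpl in O1b, O2z.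
    destruct (Hcont j g b0 O2 Hj Hb0 HO2 O2z) as [N [HN [Nb HNb]]].
    exists (fun b => (O1 b /\ N b) /\ U j b). split; [|split; [auto|]].
    + apply open_inter; [exact HT|apply open_inter; auto|apply HU; exact Hj].
    + intros b [[O1b' Nb'] Ub']. split; [exact Ub'|].
      apply (Hbox (b, act (c j b) g)); simpl; auto.
  - intros b Hb. rewrite HV. simpl.
    destruct (rep_cls_point (exist _ (b, j, g) (conj Hj Hb))) as [E1 E2].
    rewrite E1, E2. unfold tot_point, tot_b, tot_j, tot_g; simpl. tauto.
Qed.

Lemma of_pullback_box (W : Peta n q U eta -> Prop) (y : Pullback f p) :
  peta_top TB n q U eta W -> W (of_pullback y) ->
  exists O1 O2, TB O1 /\ TE O2 /\ O1 (fst (proj1_sig y)) /\ O2 (snd (proj1_sig y)) /\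
    forall y', O1 (fst (proj1_sig y')) -> O2 (snd (proj1_sig y')) -> W (of_pullback y').
Proof.
  intros HW Wy. unfold of_pullback in Wy.
  destruct (pullback_lift y) as [[[[b j] g] [Hj Hbj]] [Hb Hh]]; simpl in Wy.
  unfold tot_b in Hb; unfold tot_point, tot_j, tot_b, tot_g in Hh; simpl in Hb, Hh.
  destruct (HW j g Hj) as [O [HO HOb]].
  destruct (Htube j g b Hj Hbj) as [N [O2 [HN [HO2 [Nb [O2z Ht]]]]]].
  exists (fun b' => (N b' /\ U j b') /\ O b'), O2.
  split; [apply open_inter; [exact HT|apply open_inter; auto|exact HO]|].
  split; [exact HO2|]. rewrite <- Hb, <- Hh. split; [split; [auto|apply (HOb b Hbj); exact Wy]|].
  split; [exact O2z|]. intros [[b' z'] Hy'] [[Nb' Ub'] Ob'] O2y'; simpl in *.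
  assert (Ez : z' = act (c j b') g) by (apply Ht; auto).
  unfold of_pullback. destruct (pullback_lift _) as [t' [Hb' Hh']]; simpl in *.
  rewrite (cls_of_point t' (exist _ (b', j, g) (conj Hj Ub'))).
  - apply (HOb b' Ub'). exact Ob'.
  - rewrite Hb'. reflexivity.
  - rewrite Hh', Ez. reflexivity.
Qed.

(* continuity of the inverse: the preimage of an open set is a union of boxes *)
Lemma of_pullback_continuous :
  continuous (pullback_top TB TE f p) (peta_top TB n q U eta) of_pullback.
Proof.
  intros W HW.
  exists (fun x => exists O1 O2, TB O1 /\ TE O2 /\ O1 (fst x) /\ O2 (snd x) /\
    forall y : Pullback f p, O1 (fst (proj1_sig y)) -> O2 (snd (proj1_sig y)) ->
      W (of_pullback y)).
  split.
  - intros x [O1 [O2 [HO1 [HO2 [O1x [O2x Hy]]]]]].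
    exists O1, O2. repeat split; auto. intros x' O1x' O2x'. exists O1, O2; repeat split; auto.
  - intros y. split.
    + apply of_pullback_box, HW.
    + intros [O1 [O2 [_ [_ [O1y [O2y Hy]]]]]]. apply Hy; assumption.
Qed.

Lemma to_pullback_equivariant (x : Peta n q U eta) (m : Zq q) :
  proj1_sig (to_pullback (peta_act x m)) =
  (fst (proj1_sig (to_pullback x)), act (snd (proj1_sig (to_pullback x))) m).
Proof.
  unfold peta_act. simpl. destruct (rep_cls_point (tot_shift (peta_rep x) m)) as [E1 E2].
  rewrite E1, E2. unfold tot_point, tot_shift, tot_b, tot_j, tot_g; simpl. rewrite Hact.
  reflexivity.
Qed.

Theorem pullback_criterion :
  iso_to_pullback TB (peta_top TB n q U eta) peta_proj peta_act TE act p f.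
Proof.
  exists to_pullback, of_pullback.
  split; [exact of_to_pullback|]. split; [exact to_of_pullback|].
  split; [exact to_pullback_continuous|]. split; [exact of_pullback_continuous|].
  split; [reflexivity|exact to_pullback_equivariant].
Qed.

End Pullback_criterion.

Lemma sqrt_diff_sq (a b : R) : 0 <= a -> 0 <= b -> (sqrt a - sqrt b) ^ 2 <= Rabs (a - b).
Proof.
  intros Ha Hb. pose proof (sqrt_positivity a Ha). pose proof (sqrt_positivity b Hb).
  rewrite <- (sqrt_sqrt a Ha) at 2. rewrite <- (sqrt_sqrt b Hb) at 2.
  set (x := sqrt a) in *. set (y := sqrt b) in *.
  destruct (Rle_dec y x).
  - rewrite Rabs_right by nra. nra.
  - rewrite Rabs_left1 by nra. nra.
Qed.

Lemma lens_incl_p (n q : nat) (z : Sphere n) : (0 < q)%nat ->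
  lens_incl (lens_p n q z) = lensinf_p q (sph_incl z).
Proof.
  intros Hq. unfold lens_incl.
  pose proof (orb_rep_spec sph_act (lens_p n q z)) as E.
  apply (orb_map_eq _ q _ Hq (fun z g m => sph_act_comp n q z g m Hq) (sph_act_zero n q Hq)) in E.
  destruct E as [g ->]. rewrite incl_act. apply sig_eq; simpl.
  apply orbit_act. intros; apply sphinf_act_comp, Hq.
Qed.

Definition inf_ball (n : nat) (v0 : Vec) (r : R) (z : SphereInf) : Prop :=
  exists M, (n <= M)%nat /\ (forall k, (M <= k)%nat -> proj1_sig z k = C0) /\
            Dn M (proj1_sig z) v0 < r.

Lemma inf_ball_open (n : nat) (v0 : Vec) (r : R) : (forall k, (n <= k)%nat -> v0 k = C0) ->
  sphinf_top (inf_ball n v0 r).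
Proof.
  intros Hv0 m w [M [HnM [Hvan HD]]].
  destruct (ball_num (Dn M (proj1_sig w) v0) r) as [e [He Hb]].
  { split; [apply Dn_nonneg|exact HD]. }
  exists e; split; [exact He|]. intros w' Hw'.
  pose proof (proj1 (proj2_sig w')) as Hw'v. pose proof (proj1 (proj2_sig w)) as Hwv.
  simpl in Hw'v, Hwv.
  exists (Nat.max M m). split; [lia|]. split; [intros k Hk; apply Hw'v; lia|].
  apply (Hb (Dn m (proj1_sig w') (proj1_sig w))); [apply Dn_nonneg|exact Hw'|].
  intros s Hs. pose proof (Dn_tri (Nat.max M m) s (proj1_sig w') (proj1_sig w) v0 Hs) as T.
  rewrite (Dn_extend M (Nat.max M m) (proj1_sig w) v0) in T;
    [|lia|exact Hvan|intros k Hk; apply Hv0; lia].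
  rewrite (Dn_extend m (Nat.max M m) (proj1_sig w') (proj1_sig w)) in T;
    [exact T|lia|exact Hw'v|exact Hwv].
Qed.

Lemma inf_ball_sphere (n : nat) (v0 : Vec) (r : R) (w : Sphere n) :
  (forall k, (n <= k)%nat -> v0 k = C0) ->
  inf_ball n v0 r (sph_incl w) <-> Dn n (proj1_sig w) v0 < r.
Proof.
  intros Hv0. pose proof (proj1 (proj2_sig w)) as Hw. split.
  - intros [M [HnM [_ HD]]]. simpl in HD. rewrite <- (Dn_extend n M); assumption.
  - intros HD. exists n. split; [lia|]. split; [exact Hw|exact HD].
Qed.

Section Classifying_map.
Variables (B : Type) (TB : topology B) (n q : nat) (U : nat -> B -> Prop)
  (phi : nat -> B -> R) (eta : nat -> nat -> Zq q).
Hypothesis HT : is_topology TB.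
Hypothesis Hq : (0 < q)%nat.
Hypothesis HU : forall j, (j < n)%nat -> TB (U j).
Hypothesis Hcov : forall b, exists j, (j < n)%nat /\ U j b.
Hypothesis Hcont : forall j, (j < n)%nat -> continuous TB R_top (phi j).
Hypothesis Hrange : forall j b, (j < n)%nat -> 0 <= phi j b <= 1.
Hypothesis Hsum : forall b, rsum n (fun j => phi j b) = 1.
Hypothesis Hout : forall j b, (j < n)%nat -> ~ U j b -> phi j b = 0.
Hypothesis Hcoc : is_cocycle n q U eta.

Local Notation vec := (chart_vec n q U phi eta).

Lemma chart_ge (j : nat) (b : B) (k : nat) : (n <= k)%nat -> vec j b k = C0.
Proof.
  intros H. unfold chart_vec. replace (Nat.ltb k n) with false; [reflexivity|].
  symmetry; apply Nat.ltb_ge; exact H.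
Qed.

Lemma chart_int (j : nat) (b : B) (k : nat) : (k < n)%nat -> (exists b', U j b' /\ U k b') ->
  vec j b k = Cscale (sqrt (phi k b)) (zeta_pow q (proj1_sig (eta j k))).
Proof.
  intros Hk Hj. unfold chart_vec.
  replace (Nat.ltb k n) with true by (symmetry; apply Nat.ltb_lt; exact Hk).
  destruct (excluded_middle_informative _) as [_|Hn]; [reflexivity|contradiction].
Qed.

Lemma chart_noint (j : nat) (b : B) (k : nat) : ~ (exists b', U j b' /\ U k b') -> vec j b k = C0.
Proof.
  intros Hj. unfold chart_vec. destruct (Nat.ltb k n); [|reflexivity].
  destruct (excluded_middle_informative _) as [Hn|_]; [contradiction|reflexivity].
Qed.

Lemma chart_out (j : nat) (b : B) (k : nat) : (k < n)%nat -> ~ U k b -> vec j b k = C0.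
Proof.
  intros Hk Hkb. destruct (classic (exists b', U j b' /\ U k b')) as [Hi|Hi].
  - rewrite chart_int, Hout, sqrt_0 by assumption. unfold Cscale, C0; apply C_eq; simpl; ring.
  - apply chart_noint, Hi.
Qed.

(* |v_j(b)|^2 = sum_k phi_k(b) = 1 *)
Lemma chart_on_sphere (j : nat) (b : B) : U j b -> on_sphere n (vec j b).
Proof.
  intros Hj. split; [intros k Hk; apply chart_ge, Hk|].
  rewrite <- (Hsum b). apply rsum_ext. intros k Hk.
  destruct (classic (U k b)) as [Hu|Hu].
  - rewrite chart_int by (auto; exists b; auto).
    rewrite Cnorm2_Cscale, zeta_norm, <- Rsqr_pow2, Rsqr_sqrt by (apply Hrange, Hk). ring.
  - rewrite chart_out, (Hout k b) by assumption. unfold Cnorm2, C0; simpl; ring.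
Qed.

(* change of chart: by the cocycle identity eta_lk = eta_lj + eta_jk, v_l = zeta^{eta_lj} v_j *)
Lemma chart_change (j l : nat) (b : B) : (j < n)%nat -> (l < n)%nat -> U j b -> U l b ->
  vec l b = rot q (proj1_sig (eta l j)) (vec j b).
Proof.
  destruct Hcoc as [_ [_ Hc3]]. intros Hj Hl Ujb Ulb.
  apply functional_extensionality; intro k. unfold rot.
  destruct (Nat.lt_ge_cases k n) as [Hk|Hk].
  - destruct (classic (U k b)) as [Hu|Hu].
    + rewrite !chart_int by (auto; exists b; auto).
      rewrite <- (Hc3 l j k Hl Hj Hk) by (exists b; auto).
      rewrite zeta_mod, zeta_add by exact Hq.
      unfold Cmul, Cscale; apply C_eq; simpl; ring.
    + rewrite !chart_out by assumption. unfold Cmul, C0; apply C_eq; simpl; ring.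
  - rewrite !chart_ge by exact Hk. unfold Cmul, C0; apply C_eq; simpl; ring.
Qed.

(* each chart b |-> v_j(b) is continuous, since |sqrt x - sqrt y|^2 <= |x - y| *)
Lemma chart_continuous (j : nat) (b0 : B) (e : R) : 0 < e ->
  exists N, TB N /\ N b0 /\ forall b, N b -> Dn n (vec j b) (vec j b0) < e.
Proof.
  intros He. assert (Hn : 0 < INR n + 1) by (pose proof (pos_INR n); lra).
  destruct (finite_nbhd TB n phi HT Hcont b0 (e / (INR n + 1))) as [N [HN [Nb HNk]]].
  { apply Rdiv_lt_0_compat; lra. }
  exists N; split; [exact HN|]; split; [exact Nb|]. intros b Nbb.
  apply Rle_lt_trans with (INR n * (e / (INR n + 1))).
  - apply rsum_bound. intros k Hk. specialize (HNk b Nbb k Hk).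
    destruct (classic (exists b', U j b' /\ U k b')) as [Hi|Hi].
    + unfold Vsub. rewrite !(chart_int j _ k Hk Hi). unfold Cscale, Cnorm2; cbn [fst snd].
      pose proof (zeta_norm q (proj1_sig (eta j k))) as Z. unfold Cnorm2 in Z.
      pose proof (sqrt_diff_sq (phi k b) (phi k b0)
                    (proj1 (Hrange k b Hk)) (proj1 (Hrange k b0 Hk))).
      set (s := sqrt (phi k b)) in *. set (s0 := sqrt (phi k b0)) in *.
      set (zc := fst (zeta_pow q (proj1_sig (eta j k)))) in *.
      set (zs := snd (zeta_pow q (proj1_sig (eta j k)))) in *.
      replace ((s * zc - s0 * zc) ^ 2 + (s * zs - s0 * zs) ^ 2)
        with ((s - s0) ^ 2 * (zc ^ 2 + zs ^ 2)) by ring.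
      rewrite Z. lra.
    + unfold Vsub. rewrite !(chart_noint j _ k Hi). unfold C0, Cnorm2; simpl.
      pose proof (Rabs_pos (phi k b - phi k b0)). lra.
  - apply (Rmult_lt_reg_r (INR n + 1)); [lra|].
    replace (INR n * (e / (INR n + 1)) * (INR n + 1)) with (INR n * e) by (field; lra). nra.
Qed.

(* a chart index home(b) with b in U_home(b), and the chart point of S^{2n-1} over U_j,
   extended arbitrarily (by the home chart) outside U_j *)
Definition home (b : B) : nat := proj1_sig (constructive_indefinite_description _ (Hcov b)).

Lemma home_spec (b : B) : (home b < n)%nat /\ U (home b) b.
Proof. exact (proj2_sig (constructive_indefinite_description _ (Hcov b))). Qed.

Definition chart_index (j : nat) (b : B) : nat :=
  if excluded_middle_informative (U j b) then j else home b.

Lemma chart_index_mem (j : nat) (b : B) : U (chart_index j b) b.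
Proof.
  unfold chart_index. destruct (excluded_middle_informative (U j b)); [assumption|].
  apply home_spec.
Qed.

Definition chart_pt (j : nat) (b : B) : Sphere n :=
  exist _ (vec (chart_index j b) b) (chart_on_sphere _ _ (chart_index_mem j b)).

Lemma chart_pt_val (j : nat) (b : B) : U j b -> proj1_sig (chart_pt j b) = vec j b.
Proof.
  intros H. simpl. unfold chart_index.
  destruct (excluded_middle_informative (U j b)); [reflexivity|contradiction].
Qed.

Definition lens_map (b : B) : Lens n q := lens_p n q (chart_pt (home b) b).

Lemma lens_orbit (z w : Sphere n) :
  lens_p n q z = lens_p n q w <-> exists g : Zq q, z = sph_act w g.
Proof.
  apply (orb_map_eq _ q _ Hq (fun z g m => sph_act_comp n q z g m Hq) (sph_act_zero n q Hq)).
Qed.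

Lemma chart_pt_change (j l : nat) (b : B) : (j < n)%nat -> (l < n)%nat -> U j b -> U l b ->
  chart_pt l b = sph_act (chart_pt j b) (eta l j).
Proof.
  intros Hj Hl Hjb Hlb. apply sig_eq. cbn [proj1_sig sph_act].
  rewrite !chart_pt_val by assumption. apply chart_change; assumption.
Qed.

Lemma chart_fibre (j : nat) (b : B) (g : Zq q) : (j < n)%nat -> U j b ->
  lens_p n q (sph_act (chart_pt j b) g) = lens_map b.
Proof.
  intros Hj Hb. unfold lens_map. destruct (home_spec b) as [Hh Hhb].
  apply lens_orbit. rewrite (chart_pt_change (home b) j b), sph_act_comp by assumption.
  eexists; reflexivity.
Qed.

Lemma chart_glue (j k : nat) (b : B) (g : Zq q) : (j < n)%nat -> (k < n)%nat -> U j b -> U k b ->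
  sph_act (chart_pt j b) g = sph_act (chart_pt k b) (zq_add g (eta j k)).
Proof.
  intros Hj Hk Hjb Hkb. rewrite (chart_pt_change j k b), !sph_act_comp by assumption.
  f_equal. symmetry. apply zq_cancel. destruct Hcoc as [_ [Hc2 _]].
  apply Hc2; auto. exists b; auto.
Qed.

Lemma chart_free (j : nat) (b : B) (g g' : Zq q) :
  sph_act (chart_pt j b) g = sph_act (chart_pt j b) g' -> g = g'.
Proof.
  intros E. apply zq_eq. apply (f_equal (@proj1_sig _ _)) in E. simpl in E.
  apply (rot_inj n q _ _ _ (proj2_sig (chart_pt j b)) (proj2_sig g) (proj2_sig g') E).
Qed.

Lemma chart_trans (j : nat) (b : B) (z : Sphere n) : (j < n)%nat -> U j b ->
  lens_p n q z = lens_map b -> exists g : Zq q, z = sph_act (chart_pt j b) g.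
Proof.
  intros Hj Hb E. rewrite <- (chart_fibre j b (zq_zero q Hq) Hj Hb), sph_act_zero in E.
  apply lens_orbit, E.
Qed.

Lemma chart_act_continuous (j : nat) (g : Zq q) (b0 : B) (O2 : Sphere n -> Prop) :
  (j < n)%nat -> U j b0 -> sphere_top n O2 -> O2 (sph_act (chart_pt j b0) g) ->
  exists N, TB N /\ N b0 /\ forall b, N b -> U j b -> O2 (sph_act (chart_pt j b) g).
Proof.
  intros Hj Hb0 HO2 O2z.
  destruct (sphere_ball n O2 _ HO2 O2z) as [e [He Hball]].
  destruct (chart_continuous j b0 e He) as [N [HN [Nb HNb]]].
  exists N; split; [exact HN|]; split; [exact Nb|]. intros b Nb' Ub. apply Hball.
  cbn [proj1_sig sph_act]. rewrite !chart_pt_val, Dn_rot by assumption. apply HNb, Nb'.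
Qed.

Lemma chart_tube_core (j : nat) (g : Zq q) (b0 : B) : U j b0 -> exists r N, 0 < r /\ TB N /\
  N b0 /\ forall b (g' : Zq q), N b -> U j b ->
    Dn n (proj1_sig (sph_act (chart_pt j b) g')) (proj1_sig (sph_act (chart_pt j b0) g)) < r ->
    g' = g.
Proof.
  intros Hb0. destruct (rot_sep n q) as [c [Hc Hsep]].
  destruct (chart_continuous j b0 (c / 4)) as [N [HN [Nb HNb]]]; [lra|].
  exists (c / 4), N. split; [lra|]. split; [exact HN|]. split; [exact Nb|].
  intros b g' Nb' Ub HD. cbn [proj1_sig sph_act] in HD. rewrite !chart_pt_val in HD by assumption.
  apply zq_eq, (orbit_match n q c (vec j b) (vec j b0)); auto.
  - apply chart_on_sphere, Ub.
  - exact (proj2_sig g).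
  - exact (proj2_sig g').
Qed.

Lemma chart_tube (j : nat) (g : Zq q) (b0 : B) : (j < n)%nat -> U j b0 ->
  exists N O2, TB N /\ sphere_top n O2 /\ N b0 /\ O2 (sph_act (chart_pt j b0) g) /\
  forall b z, N b -> U j b -> O2 z -> lens_p n q z = lens_map b -> z = sph_act (chart_pt j b) g.
Proof.
  intros Hj Hb0. destruct (chart_tube_core j g b0 Hb0) as [r [N [Hr [HN [Nb Hcore]]]]].
  exists N, (fun w : Sphere n => Dn n (proj1_sig w) (proj1_sig (sph_act (chart_pt j b0) g)) < r).
  split; [exact HN|]. split; [apply ball_open|]. split; [exact Nb|].
  split; [rewrite Dn_self; exact Hr|].
  intros b z Nb' Ub Hz Ez. destruct (chart_trans j b z Hj Ub Ez) as [g' ->].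
  f_equal. apply (Hcore b g'); assumption.
Qed.

Lemma lens_map_chart (b : B) (j : nat) : (j < n)%nat -> U j b ->
  exists z : Sphere n, proj1_sig z = vec j b /\ lens_map b = lens_p n q z.
Proof.
  intros Hj Hb. exists (chart_pt j b). split; [apply chart_pt_val, Hb|].
  rewrite <- (chart_fibre j b (zq_zero q Hq) Hj Hb), sph_act_zero. reflexivity.
Qed.

Lemma lens_map_continuous : continuous TB (lens_top n q) lens_map.
Proof.
  intros V HV. apply open_local; [exact HT|]. intros b0 Vb0.
  destruct (home_spec b0) as [Hj Hb0]. set (j := home b0) in Hj, Hb0.
  rewrite <- (chart_fibre j b0 (zq_zero q Hq) Hj Hb0) in Vb0.
  destruct (chart_act_continuous j (zq_zero q Hq) b0 (fun z => V (lens_p n q z)) Hj Hb0 HV Vb0)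
    as [N [HN [Nb HNb]]].
  exists (fun b => N b /\ U j b). split; [apply open_inter; auto|]. split; [auto|].
  intros b [Nb' Ub]. rewrite <- (chart_fibre j b (zq_zero q Hq) Hj Ub). apply HNb; assumption.
Qed.

Theorem lens_map_classifies :
  iso_to_pullback TB (peta_top TB n q U eta) peta_proj peta_act
    (sphere_top n) sph_act (lens_p n q) lens_map.
Proof.
  apply (pullback_criterion _ _ _ _ _ _ _ _ _ _ _ _ chart_pt).
  - exact HT.
  - exact HU.
  - exact Hcov.
  - intros z g m. apply sph_act_comp, Hq.
  - exact chart_fibre.
  - exact chart_glue.
  - intros j b g g' _ _. apply chart_free.
  - exact chart_trans.
  - exact chart_act_continuous.
  - exact chart_tube.
Qed.

Local Notation inf_chart j b := (sph_incl (chart_pt j b)).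

Lemma inf_chart_fibre (j : nat) (b : B) (g : Zq q) : (j < n)%nat -> U j b ->
  lensinf_p q (sphinf_act (inf_chart j b) g) = lens_incl (lens_map b).
Proof.
  intros Hj Hb. rewrite <- incl_act, <- lens_incl_p, chart_fibre by assumption. reflexivity.
Qed.

Lemma inf_chart_free (j : nat) (b : B) (g g' : Zq q) :
  sphinf_act (inf_chart j b) g = sphinf_act (inf_chart j b) g' -> g = g'.
Proof.
  intros E. rewrite <- !incl_act in E. apply (chart_free j b).
  apply sig_eq. exact (f_equal (@proj1_sig _ _) E).
Qed.

Lemma inf_chart_trans (j : nat) (b : B) (z : SphereInf) : (j < n)%nat -> U j b ->
  lensinf_p q z = lens_incl (lens_map b) -> exists g : Zq q, z = sphinf_act (inf_chart j b) g.
Proof.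
  intros Hj Hb E. rewrite <- (inf_chart_fibre j b (zq_zero q Hq) Hj Hb), sphinf_act_zero in E.
  apply (orb_map_eq _ q _ Hq (fun z g m => sphinf_act_comp q z g m Hq) (sphinf_act_zero q Hq)), E.
Qed.

Lemma inf_chart_tube (j : nat) (g : Zq q) (b0 : B) : (j < n)%nat -> U j b0 ->
  exists N O2, TB N /\ sphinf_top O2 /\ N b0 /\ O2 (sphinf_act (inf_chart j b0) g) /\
  forall b z, N b -> U j b -> O2 z -> lensinf_p q z = lens_incl (lens_map b) ->
    z = sphinf_act (inf_chart j b) g.
Proof.
  intros Hj Hb0. destruct (chart_tube_core j g b0 Hb0) as [r [N [Hr [HN [Nb Hcore]]]]].
  set (v0 := proj1_sig (sph_act (chart_pt j b0) g)).
  assert (Hv0 : forall k, (n <= k)%nat -> v0 k = C0)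
    by exact (proj1 (proj2_sig (sph_act (chart_pt j b0) g))).
  exists N, (inf_ball n v0 r). split; [exact HN|]. split; [apply inf_ball_open, Hv0|].
  split; [exact Nb|]. split.
  - rewrite <- incl_act. apply inf_ball_sphere; [exact Hv0|]. unfold v0. rewrite Dn_self. exact Hr.
  - intros b z Nb' Ub Hz Ez. destruct (inf_chart_trans j b z Hj Ub Ez) as [g' ->].
    f_equal. apply (Hcore b g' Nb' Ub). rewrite <- incl_act in Hz.
    apply (inf_ball_sphere n v0 r _ Hv0), Hz.
Qed.

Theorem lens_incl_map_classifies :
  iso_to_pullback TB (peta_top TB n q U eta) peta_proj peta_act
    sphinf_top sphinf_act (lensinf_p q) (fun b => lens_incl (lens_map b)).
Proof.
  apply (pullback_criterion _ _ _ _ _ _ _ _ _ _ _ _ (fun j b => inf_chart j b)).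
  - exact HT.
  - exact HU.
  - exact Hcov.
  - intros z g m. apply sphinf_act_comp, Hq.
  - exact inf_chart_fibre.
  - intros j k b g Hj Hk Hjb Hkb. rewrite <- !incl_act. f_equal. apply chart_glue; assumption.
  - intros j b g g' _ _. apply inf_chart_free.
  - exact inf_chart_trans.
  - intros j g b0 O2 Hj Hb0 HO2 O2z. rewrite <- incl_act in O2z.
    destruct (chart_act_continuous j g b0 (fun w => O2 (sph_incl w)) Hj Hb0 (HO2 n) O2z)
      as [N [HN [Nb HNb]]].
    exists N. split; [exact HN|]. split; [exact Nb|]. intros b Nb' Ub.
    rewrite <- incl_act. apply HNb; assumption.
  - exact inf_chart_tube.
Qed.

End Classifying_map.

Theorem mainTheorem2 (B : Type) (TB : topology B) (n q : nat)
  (U : nat -> B -> Prop) (phi : nat -> B -> R) (eta : nat -> nat -> Zq q) :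
  is_topology TB ->
  (0 < q)%nat ->
  (* U_0,...,U_{n-1} is an open cover of B *)
  (forall j, (j < n)%nat -> TB (U j)) ->
  (forall b, exists j, (j < n)%nat /\ U j b) ->
  (* partition of unity dominated by the cover *)
  (forall j, (j < n)%nat -> continuous TB R_top (phi j)) ->
  (forall j b, (j < n)%nat -> 0 <= phi j b <= 1) ->
  (forall b, rsum n (fun j => phi j b) = 1) ->
  (forall j b, (j < n)%nat -> ~ U j b -> phi j b = 0) ->
  (* eta is a Z_q-valued 1-cocycle on the nerve *)
  is_cocycle n q U eta ->
  exists f : B -> Lens n q,
    (* f is well defined: on each U_j it is given by the chart formula *)
    (forall b j, (j < n)%nat -> U j b ->
       exists z : Sphere n, proj1_sig z = chart_vec n q U phi eta j b /\
                            f b = lens_p n q z) /\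
    continuous TB (lens_top n q) f /\
    (* P_eta is isomorphic to f^*(S^{2n-1}) *)
    iso_to_pullback TB (peta_top TB n q U eta) peta_proj peta_act
      (sphere_top n) sph_act (lens_p n q) f /\
    (* hence also to (i o f)^*(S^infty), i : L^n_q -> L^infty_q *)
    iso_to_pullback TB (peta_top TB n q U eta) peta_proj peta_act
      sphinf_top sphinf_act (lensinf_p q) (fun b => lens_incl (f b)).
Proof.
  intros HT Hq HU Hcov Hcont Hrange Hsum Hout Hcoc.
  exists (lens_map B n q U phi eta Hcov Hrange Hsum Hout).
  split; [apply lens_map_chart; assumption|].
  split; [apply lens_map_continuous; assumption|].
  split; [apply lens_map_classifies; assumption|].
  apply lens_incl_map_classifies; assumption.
Qed.
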